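(* Let $P$ be a poset on $[n]=\{1,\dots,n\}$ whose labeling is natural (the identity permutation $e$ is a linear extension), and let $x_1,\dots,x_n$ be strictly positive reals. Let $M$ be the transition matrix of the promotion graph of $P$. Define, for $\pi\in\mathcal{L}(P)$, $$w(\pi)=\prod_{i=1}^{n}\frac{x_1+\cdots+x_i}{x_{\pi_1}+\cdots+x_{\pi_i}}.$$ Then $w$ is the stationary state of the promotion graph Markov chain normalized by $w(e)=1$, i.e. $\sum_{\pi\in\mathcal{L}(P)}M(\pi',\pi)\,w(\pi)=0$ for every $\pi'\in\mathcal{L}(P)$.
   Context: Linear extensions: $\mathcal{L}(P)=\{\pi\in S_n : i\prec j \text{ in } P \Rightarrow \pi^{-1}_i<\pi^{-1}_j\}$, written in one-line notation $\pi=\pi_1\cdots\pi_n$ (so $i\prec j$ means $i$ appears before $j$). For $1\le i<n$, the operator $\tau_i$ acts on the right on $\mathcal{L}(P)$: $\pi\tau_i$ is obtained from $\pi$ by swapping $\pi_i$ and $\pi_{i+1}$ if they are incomparable in $P$, and $\pi\tau_i=\pi$ otherwise. Operators compose as right actions: $\pi(\sigma\tau)=(\pi\sigma)\tau$. The extended promotion operators are $\partial_j=\tau_j\tau_{j+1}\cdots\tau_{n-1}$ for $1\le j\le n$ ($\partial_n$ is the identity). Promotion graph: vertex set $\mathcal{L}(P)$, and for each $\pi\in\mathcal{L}(P)$ and $j\in[n]$ a directed edge $\pi\to\pi\partial_j$ of weight $x_{\pi_j}$. Transition matrix $M$ (rows and columns indexed by $\mathcal{L}(P)$): for $\pi'\neq\pi$,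 $M(\pi',\pi)$ is the sum of the weights of edges $\pi\to\pi'$; $M(\pi,\pi)$ is minus the sum of weights of all edges $\pi\to\pi'$ with $\pi'\ne\pi$ (loops are not counted). *)

(* Conventions: elements and positions are 0-indexed,
   i.e. [n] = {1..n} is rendered as 'I_n = {0..n-1}. *)
From HB Require Import structures.
From mathcomp Require Import all_boot all_order all_algebra all_fingroup.
Set Implicit Arguments. Unset Strict Implicit. Unset Printing Implicit Defensive.
Import GRing.Theory Num.Theory.
Local Open Scope ring_scope.

Definition is_poset (n : nat) (le : rel 'I_n) : Prop :=
  [/\ reflexive le, antisymmetric le & transitive le].

Definition prec (n : nat) (le : rel 'I_n) (i j : 'I_n) : bool := (i != j) && le i j.

Definition comparable (n : nat) (le : rel 'I_n) (i j : 'I_n) : bool := le i j || le j i.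

(* One-line notation: pi : 'S_n, pi k = the element in position k;
   (pi^-1) i = position of element i. *)
Definition is_linext (n : nat) (le : rel 'I_n) (pi : 'S_n) : bool :=
  [forall i, forall j, prec le i j ==> ((pi^-1)%g i < (pi^-1)%g j)%N].

Definition natural_labeling (n : nat) (le : rel 'I_n) : bool := is_linext le 1%g.

(* tau_k (0-indexed position k, swaps positions k and k+1):
   (tperm a b * pi) x = pi (tperm a b x). *)
Definition tau (n : nat) (le : rel 'I_n) (k : nat) (pi : 'S_n) : 'S_n :=
  match (insub k : option 'I_n), (insub k.+1 : option 'I_n) with
  | Some a, Some b => if comparable le (pi a) (pi b) then pi else (tperm a b * pi)%g
  | _, _ => pi
  end.

(* extended promotion  pi d_j = pi tau_j tau_{j+1} ... tau_{n-2} (0-indexed),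
   right action: tau_j applied first. d_{n-1} is the identity. *)
Definition promo (n : nat) (le : rel 'I_n) (j : nat) (pi : 'S_n) : 'S_n :=
  foldl (fun p k => tau le k p) pi (iota j (n.-1 - j)).

Definition trans_mx (R : nzRingType) (n : nat) (le : rel 'I_n) (x : 'I_n -> R)
  (pi' pi : 'S_n) : R :=
  if pi' != pi then \sum_(j < n | promo le j pi == pi') x (pi j)
  else - \sum_(j < n | promo le j pi != pi) x (pi j).

Definition wt (R : fieldType) (n : nat) (x : 'I_n -> R) (pi : 'S_n) : R :=
  \prod_(i < n) ((\sum_(k < n | (k <= i)%N) x k) / (\sum_(k < n | (k <= i)%N) x (pi k))).

From Pilot Require Import Defs.
From HB Require Import structures.
From mathcomp Require Import all_boot all_order all_algebra all_fingroup.
From mathcomp Require Import zify ring.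
Import GRing.Theory Num.Theory.
Local Open Scope ring_scope.

(* Each tau_k is an involution preserving linear extensions, so the extended
   promotion d_j is a bijection of L(P) whose inverse rho_j applies the same
   taus in reverse order.  Hence the inflow into pi' is
   sum_j x_{(pi' rho_j)_j} w(pi' rho_j).  Write u_i, t_i for the i-th prefix
   sums of x along pi' and along pi' rho_{i-1}.  Since rho_j only moves
   positions >= j, w(pi' rho_j) has denominator prod_{i<j} u_{i+1} prod_{i>=j}
   t_{i+1}, while x_{(pi' rho_j)_j} = t_{j+1} - u_j, and the inflow telescopes
   to u_n w(pi') = (sum_j x_{pi'_j}) w(pi'), which is the outflow.  No property
   of the relation is used. *)

Lemma val_tperm_adj {n} {a b : 'I_n} (m : 'I_n) {k} : val a = k -> val b = k.+1 ->
  val (tperm a b m) = if val m == k then k.+1 else if val m == k.+1 then k else val m.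
Proof.
move=> va vb; case: tpermP => [->|->|/eqP Ha /eqP Hb].
- by rewrite va vb eqxx.
- by rewrite vb va eqxx (_ : (k.+1 == k) = false) //; lia.
- by rewrite -vb -va !(inj_eq val_inj) (negbTE Ha) (negbTE Hb).
Qed.

Lemma telescope_mixed_prod (R : fieldType) (m : nat) (u t : nat -> R) :
  (forall i, (i < m)%N -> u i.+1 != 0 /\ t i.+1 != 0) -> u 0%N = 0 ->
  \sum_(j < m) (t j.+1 - u j) / \prod_(i < m) (if (i < j)%N then u i.+1 else t i.+1)
  = u m / \prod_(i < m) u i.+1.
Proof.
move=> ut_neq0 u0.
pose Q j := \prod_(i < m) (if (i < j)%N then u i.+1 else t i.+1).
have Q_neq0 j : Q j != 0.
  by apply/prodf_neq0 => i _; have [? ?] := ut_neq0 i (ltn_ord i); case: ifP.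
have step j : (j < m)%N -> (t j.+1 - u j) / Q j = u j.+1 / Q j.+1 - u j / Q j.
  move=> lt_jm; have [u_neq0 t_neq0] := ut_neq0 j lt_jm.
  pose Z := \prod_(i < m | i != Ordinal lt_jm) (if (i < j)%N then u i.+1 else t i.+1).
  have QjE : Q j = t j.+1 * Z by rewrite /Q (bigD1 (Ordinal lt_jm)) //= ltnn.
  have QSjE : Q j.+1 = u j.+1 * Z.
    rewrite /Q (bigD1 (Ordinal lt_jm)) //= ltnSn; congr (_ * _).
    apply: eq_bigr => i ij.
    by rewrite ltnS leq_eqVlt (_ : (i == j :> nat) = false) //; apply: negbTE.
  have Z_neq0 : Z != 0 by move: (Q_neq0 j); rewrite QjE mulf_eq0 negb_or => /andP [].
  by rewrite QSjE QjE; field; rewrite Z_neq0 u_neq0 t_neq0.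
rewrite -(big_mkord xpredT (fun j => (t j.+1 - u j) / Q j)).
rewrite (@telescope_sumr_eq _ 0 m (fun j => u j / Q j)) //.
rewrite u0 mul0r subr0; congr (_ / _).
by apply: eq_bigr => i _; rewrite ltn_ord.
Qed.

Section Promotion.
Variables (n : nat) (le : rel 'I_n).

Lemma tauP k (p : 'S_n) : tau le k p = p \/
  exists a b : 'I_n, [/\ val a = k, val b = k.+1,
     ~~ Defs.comparable le (p a) (p b) & tau le k p = (tperm a b * p)%g].
Proof.
rewrite /tau; case: (insubP 'I_n k) => [a _ va|_];
  case: (insubP 'I_n k.+1) => [b _ vb|_] //=; try by left.
by case: ifP => Hc; [left | right; exists a, b; rewrite Hc].
Qed.

Lemma tauK k : involutive (tau le k).
Proof.
move=> p; rewrite /tau; case: (insubP 'I_n k) => [a _ _|_];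
  case: (insubP 'I_n k.+1) => [b _ _|_] //=.
case Hc: (Defs.comparable le (p a) (p b)); first by rewrite Hc.
rewrite !permM tpermL tpermR /Defs.comparable orbC.
by move: Hc; rewrite /Defs.comparable => ->; rewrite mulgA tperm2 mul1g.
Qed.

Lemma tperm_adj_lt {a b y z : 'I_n} {k} : val a = k -> val b = k.+1 ->
  (y < z)%N -> ~ (y = a /\ z = b) -> (tperm a b y < tperm a b z)%N.
Proof.
move=> va vb lt_yz yz_ab.
have {}yz_ab : ~ (val y = k /\ val z = k.+1).
  by move=> [Hy Hz]; apply: yz_ab; split; apply: val_inj; rewrite ?Hy ?Hz.
rewrite (val_tperm_adj y va vb) (val_tperm_adj z va vb).
by case: (val y =P k); case: (val z =P k); case: (val y =P k.+1);
  case: (val z =P k.+1); move: lt_yz yz_ab => /=; lia.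
Qed.

Lemma tau_linext k (p : 'S_n) : is_linext le p -> is_linext le (tau le k p).
Proof.
case: (tauP k p) => [->//|[a [b [va vb inc_ab ->]]]] p_ext.
apply/forallP => i; apply/forallP => j; apply/implyP => ij.
have := forallP (forallP p_ext i) j; rewrite ij /= => lt_ij.
rewrite invMg !permM tpermV; apply: (tperm_adj_lt va vb lt_ij).
move=> [Hi Hj]; move: inc_ab; rewrite -Hi -Hj !permKV /Defs.comparable.
by move: ij; rewrite /prec => /andP [_ ->].
Qed.

Definition promo_inv j (p : 'S_n) : 'S_n :=
  foldr (tau le) p (iota j (n.-1 - j)).

Lemma promoK j : cancel (promo le j) (promo_inv j).
Proof.
rewrite /promo /promo_inv => p.
by elim: (iota _ _) p => //= k s IH p; rewrite IH tauK.
Qed.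

Lemma promo_invK j : cancel (promo_inv j) (promo le j).
Proof.
rewrite /promo /promo_inv => p.
by elim: (iota _ _) => //= k s IH; rewrite tauK.
Qed.

Lemma promo_inv_linext j p : is_linext le p -> is_linext le (promo_inv j p).
Proof. by rewrite /promo_inv; elim: (iota _ _) => //= k s IH /IH/tau_linext. Qed.

Lemma sum_trans_mx (R : nzRingType) (x : 'I_n -> R) (f : 'S_n -> R) (s : 'S_n) :
  is_linext le s ->
  \sum_(p : 'S_n | is_linext le p) trans_mx le x s p * f p =
  \sum_(j < n) x (promo_inv j s j) * f (promo_inv j s)
  - (\sum_(j < n) x (s j)) * f s.
Proof.
move=> s_ext.
have trans_mxE p : trans_mx le x s p =
    \sum_(j < n | promo le j p == s) x (p j) - (p == s)%:R * \sum_(j < n) x (p j).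
  rewrite /trans_mx; case: eqVneq => [->|_] /=; last by rewrite mul0r subr0.
  rewrite mul1r (bigID (fun j : 'I_n => promo le j p == p) predT) /=.
  by rewrite opprD addrA subrr sub0r.
under eq_bigr => p _ do rewrite trans_mxE mulrBl mulr_suml.
rewrite sumrB (exchange_big_dep predT) //= (bigD1 s) //= eqxx mul1r.
rewrite [X in _ - (_ + X)]big1 ?addr0; last first.
  by move=> p /andP [_ /negbTE ->]; rewrite !mul0r.
congr (_ - _); apply: eq_bigr => j _.
apply: (big_pred1 (promo_inv j s)) => p /=; apply/andP/eqP.
- by move=> [_ /eqP <-]; rewrite promoK.
- by move=> ->; rewrite promo_invK promo_inv_linext ?eqxx.
Qed.

Variables (R : realFieldType) (x : 'I_n -> R).

Definition pref (p : 'S_n) (s : nat) : R := \sum_(m < n | (m < s)%N) x (p m).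

Lemma pref_tau k p s : s != k.+1 -> pref (tau le k p) s = pref p s.
Proof.
move=> s_neq; case: (tauP k p) => [->//|[a [b [va vb _ ->]]]].
rewrite /pref (reindex_inj (@perm_inj _ (tperm a b))) /=.
apply: eq_big => m; last by rewrite permM tpermK.
rewrite (val_tperm_adj m va vb) /=.
by case: (nat_of_ord m =P k) => ?; case: (nat_of_ord m =P k.+1) => ? /=;
  apply/idP/idP; move: s_neq; lia.
Qed.

Lemma pref_taus (ks : seq nat) p s : all (fun k => s != k.+1) ks ->
  pref (foldr (tau le) p ks) s = pref p s.
Proof. by elim: ks => //= k ks IH /andP [sk /IH <-]; rewrite pref_tau. Qed.

Lemma pref_promo_inv_le j s p : (s <= j)%N -> pref (promo_inv j p) s = pref p s.
Proof.
move=> le_sj; apply: pref_taus; apply/allP => k.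
by rewrite mem_iota => /andP [? ?]; apply/eqP; lia.
Qed.

Lemma pref_promo_inv_gt j i p : (j <= i)%N -> (i < n)%N ->
  pref (promo_inv j p) i.+1 = pref (promo_inv i p) i.+1.
Proof.
move=> le_ji lt_in; rewrite /promo_inv.
have -> : (n.-1 - j = (i - j) + (n.-1 - i))%N by lia.
rewrite iotaD foldr_cat subnKC //; apply: pref_taus; apply/allP => k.
by rewrite mem_iota => /andP [? ?]; apply/eqP; lia.
Qed.

Lemma pref0 (p : 'S_n) : pref p 0 = 0.
Proof. by rewrite /pref big_pred0. Qed.

Lemma pref_full (p : 'S_n) : pref p n = \sum_(j < n) x (p j).
Proof. by apply: eq_bigl => m; rewrite ltn_ord. Qed.

Lemma x_prefS (p : 'S_n) (j : 'I_n) : x (p j) = pref p j.+1 - pref p j.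
Proof.
rewrite /pref (bigD1 j) //= (eq_bigl (fun m : 'I_n => (m < j)%N)) ?addrK // => m /=.
by rewrite ltnS ltn_neqAle -(inj_eq val_inj) andbC.
Qed.

Lemma wtE p : wt x p = (\prod_(i < n) pref 1%g i.+1) / \prod_(i < n) pref p i.+1.
Proof.
rewrite /wt prodf_div; congr (_ / _); apply: eq_bigr => i _.
by apply: eq_big => [k|k _]; rewrite ?ltnS ?perm1.
Qed.

Hypothesis x_gt0 : forall i, 0 < x i.

Lemma prefS_neq0 p (i : 'I_n) : pref p i.+1 != 0.
Proof.
rewrite lt0r_neq0 // /pref (bigD1 (Ordinal (leq_ltn_trans (leq0n i) (ltn_ord i)))) //=.
by rewrite ltr_pwDl ?sumr_ge0 // => m _; apply: Order.POrderTheory.ltW.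
Qed.

Lemma inflow_promo_inv s :
  \sum_(j < n) x (promo_inv j s j) * wt x (promo_inv j s) =
  (\sum_(j < n) x (s j)) * wt x s.
Proof.
pose u k := pref s k.
pose t k := pref (promo_inv k.-1 s) k.
pose C := \prod_(i < n) pref 1%g i.+1.
have termE (j : 'I_n) : x (promo_inv j s j) * wt x (promo_inv j s) =
    C * ((t j.+1 - u j) / \prod_(i < n) (if (i < j)%N then u i.+1 else t i.+1)).
  rewrite wtE -/C mulrCA mulrA [RHS]mulrA x_prefS (pref_promo_inv_le j j s (leqnn j)).
  congr (C * _ / _); apply: eq_bigr => i _.
  case: (ltnP i j) => [lt_ij|le_ji]; first exact: pref_promo_inv_le.
  exact: pref_promo_inv_gt.
under eq_bigr => j _ do rewrite termE.
rewrite -mulr_sumr telescope_mixed_prod; first last.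
- exact: pref0.
- by move=> i lt_in; rewrite !(prefS_neq0 _ (Ordinal lt_in)).
by rewrite wtE -/C /u pref_full mulrCA mulrA.
Qed.

End Promotion.

Theorem theorem4p5 (R : realFieldType) (n : nat) (le : rel 'I_n) (x : 'I_n -> R) :
  is_poset le -> natural_labeling le -> (forall i, 0 < x i) ->
  wt x 1%g = 1 /\
  (forall pi' : 'S_n, is_linext le pi' ->
     \sum_(pi : 'S_n | is_linext le pi) trans_mx le x pi' pi * wt x pi = 0).
Proof.
move=> _ _ x_gt0; split.
  by rewrite wtE divff //; apply/prodf_neq0 => i _; apply: prefS_neq0.
move=> s s_ext.
by rewrite sum_trans_mx // inflow_promo_inv // subrr.
Qed.
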